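(* Let $n\ge 1$, let $x_0,\dots,x_n\in C[0,1]$ be real-valued with $x_k(\xi)\neq x_{k-1}(\xi)$ for all $\xi\in[0,1]$ and $k=1,\dots,n$. Let $F:Q[0,1]\to\mathbb{R}$ be $(n-1)$-times Gâteaux differentiable. Let $a_0\in\mathbb{R}$ and let $a_1,\dots,a_n\in C[0,1]$. Suppose that for every $\xi\in[0,1]$ and every $i\in\{0,1,\dots,n\}$ the continued fraction $Q_n(x^i(\cdot,\xi),\xi)$ is well defined and the interpolation conditions $$Q_n(x^i(\cdot,\xi),\xi)=F(x^i(\cdot,\xi)),\qquad i=0,1,\dots,n,\ \ \xi\in[0,1],$$ hold. Then: (i) $a_0=F(x_0)$; (ii) the function $\xi\mapsto F(x^1(\cdot,\xi))$ is differentiable on $[0,1]$ (one-sidedly at the endpoints) and $$a_1(\xi)=\frac{-1}{x_1(\xi)-x_0(\xi)}\,\frac{d}{d\xi}F(x^1(\cdot,\xi)),\qquad \xi\in[0,1];$$ (iii) for each $k\in\{2,\dots,n\}$ and each relatively open subset $J\subseteq[0,1]$ on which $G_k(\xi)$ is well defined, $G_k$ is differentiable on $J$ and $$a_k(\xi)=\frac{-1}{x_k(\xi)-x_{k-1}(\xi)}\,\frac{d}{d\xi}G_k(\xi),\qquad \xi\in J .$$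
   Context: Continued fraction notation: for quantities $b_0,c_1,b_1,\dots,c_m,b_m$, the finite continued fraction $b_0+\frac{c_1}{b_1}+\frac{c_2}{b_2}+\dots+\frac{c_m}{b_m}$ means $b_0+\cfrac{c_1}{b_1+\cfrac{c_2}{b_2+\dots+\cfrac{c_m}{b_m}}}$; it is called well defined if, when it is evaluated from the innermost level outward, every denominator encountered is nonzero. $Q[0,1]$ denotes the space of real-valued piecewise continuous functions on $[0,1]$. $H$ is the Heaviside function, $H(t)=1$ for $t\ge 0$, $H(t)=0$ for $t<0$. Given $x_0,\dots,x_n\in C[0,1]$, the continual nodes are $x^0(z,\xi):=x_0(z)$ and $x^i(z,\xi):=x_0(z)+H(z-\xi)\,(x_i(z)-x_0(z))$ for $i=1,\dots,n$, $z,\xi\in[0,1]$; for fixed $\xi$, $x^i(\cdot,\xi)\in Q[0,1]$. Integral continued C-fraction: given a number $a_0$ and kernels $a_1,\dots,a_n:[0,1]\to\mathbb{R}$, for $x\in Q[0,1]$ and $\xi\in[0,1]$ put $A_j(x,\xi):=\int_0^1 a_j(z)\,[x(z)-x^{j-1}(z,\xi)]\,dz$ ($j=1,\dots,n$) and $$Q_n(x(\cdot),\xi):=a_0+\frac{A_1(x,\xi)}{1}+\frac{A_2(x,\xi)}{1}+\dots+\frac{A_n(x,\xi)}{1}.$$ For $k\in\{2,\dots,n\}$, $j\in\{1,\dots,k-1\}$ and $\xi\in[0,1]$ put $A^{(k)}_j(\xi):=\int_0^1 a_j(z)\,[x^k(z,\xi)-x^{j-1}(z,\xi)]\,dz$ and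 $$G_k(\xi):=\cfrac{A^{(k)}_{k-1}(\xi)}{-1+\cfrac{A^{(k)}_{k-2}(\xi)}{-1+\dots+\cfrac{A^{(k)}_{2}(\xi)}{-1+\cfrac{A^{(k)}_{1}(\xi)}{F(x^k(\cdot,\xi))-F(x_0)}}}},$$ so that $G_2(\xi)=A^{(2)}_1(\xi)/\big(F(x^2(\cdot,\xi))-F(x_0)\big)$ and $G_3(\xi)=A^{(3)}_2(\xi)/\big(-1+A^{(3)}_1(\xi)/(F(x^3(\cdot,\xi))-F(x_0))\big)$. *)

From Stdlib Require Import Reals Lra Lia Arith List ClassicalEpsilon.
Import ListNotations.
Open Scope R_scope.

Definition cont01 (f : R -> R) : Prop :=
  forall z, 0 <= z <= 1 -> forall eps, 0 < eps ->
    exists delta, 0 < delta /\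
      forall y, 0 <= y <= 1 -> Rabs (y - z) < delta -> Rabs (f y - f z) < eps.

(* Piecewise continuity on [0,1] (f ∈ Q[0,1]): a finite partition
   0 = t_0 < ... < t_m = 1 such that on each open piece f agrees with a
   function continuous on the closed piece (finite one-sided limits). *)
Definition PC01 (f : R -> R) : Prop :=
  exists (m : nat) (t : nat -> R),
    t 0%nat = 0 /\ t m = 1 /\
    (forall i, (i < m)%nat -> t i < t (S i)) /\
    (forall i, (i < m)%nat -> exists g : R -> R,
        (forall z, t i <= z <= t (S i) -> continuity_pt g z) /\
        (forall z, t i < z < t (S i) -> f z = g z)).

Fixpoint gateaux_diff (k : nat) (F : (R -> R) -> R) : Prop :=
  match k with
  | O => True
  | S k' => forall h, PC01 h ->
      exists dF : (R -> R) -> R,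
        (forall x, PC01 x ->
           derivable_pt_lim (fun t => F (fun z => x z + t * h z)) 0 (dF x)) /\
        gateaux_diff k' dF
  end.

(* Riemann integral over [a,b]: the common value of RiemannInt pr over
   integrability proofs pr (unspecified if f is not Riemann integrable; all
   integrands used below are Riemann integrable). *)
Definition Rint (f : R -> R) (a b : R) : R :=
  epsilon (inhabits 0)
    (fun v => exists pr : Riemann_integrable f a b, RiemannInt pr = v).

Definition Heav (t : R) : R := if Rle_dec 0 t then 1 else 0.

Definition node (xs : nat -> R -> R) (i : nat) (xi : R) : R -> R :=
  match i with
  | O => xs O
  | S _ => fun z => xs O z + Heav (z - xi) * (xs i z - xs O z)
  end.

(* Finite continued fraction c1/(b1 + c2/(b2 + ... + cm/bm)), given as the
   list [(c1,b1);...;(cm,bm)], evaluated from the innermost level outward;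
   None if some denominator encountered is zero (not well defined). *)
Fixpoint cf_tail (l : list (R * R)) : option R :=
  match l with
  | [] => Some 0
  | (c, b) :: l' =>
      match cf_tail l' with
      | None => None
      | Some v => if Req_EM_T (b + v) 0 then None else Some (c / (b + v))
      end
  end.

Definition cfrac (b0 : R) (l : list (R * R)) : option R :=
  match cf_tail l with Some v => Some (b0 + v) | None => None end.

Definition Acoef (a : nat -> R -> R) (xs : nat -> R -> R) (j : nat)
    (x : R -> R) (xi : R) : R :=
  Rint (fun z => a j z * (x z - node xs (j - 1) xi z)) 0 1.

Definition Qn (n : nat) (a0 : R) (a : nat -> R -> R) (xs : nat -> R -> R)
    (x : R -> R) (xi : R) : option R :=
  cfrac a0 (map (fun j => (Acoef a xs j x xi, 1)) (seq 1 n)).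

(* G_k(xi) as a (partial) continued fraction:
   A^{(k)}_{k-1}/(-1 + A^{(k)}_{k-2}/(-1 + ... + A^{(k)}_1/(F(x^k)-F(x_0)))). *)
Definition Gk_cf (F : (R -> R) -> R) (a : nat -> R -> R) (xs : nat -> R -> R)
    (k : nat) (xi : R) : option R :=
  cf_tail (map (fun j => (Acoef a xs j (node xs k xi) xi,
                          if Nat.eqb j 1 then F (node xs k xi) - F (xs O) else -1))
               (rev (seq 1 (k - 1)))).

(* G_k as a real function (value 0 where not well defined). *)
Definition Gk (F : (R -> R) -> R) (a : nat -> R -> R) (xs : nat -> R -> R)
    (k : nat) (xi : R) : R :=
  match Gk_cf F a xs k xi with Some v => v | None => 0 end.

(* f has derivative l at xi relative to the set D (one-sided at boundary
   points of an interval). *)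
Definition has_deriv_within (D : R -> Prop) (f : R -> R) (xi l : R) : Prop :=
  forall eps, 0 < eps -> exists delta, 0 < delta /\
    forall h, h <> 0 -> Rabs h < delta -> D (xi + h) ->
      Rabs ((f (xi + h) - f xi) / h - l) < eps.

Definition I01 (z : R) : Prop := 0 <= z <= 1.

Definition rel_open01 (J : R -> Prop) : Prop :=
  (forall z, J z -> I01 z) /\
  (forall z, J z -> exists delta, 0 < delta /\
      forall y, I01 y -> Rabs (y - z) < delta -> J y).

(* Evaluating [Q_n] at the node [x^i] kills the coefficient [A_(i+1)], since
   [x^i - x^i = 0]; hence the interpolation conditions say that the truncated
   fraction [A_1/1 + ... + A_k/1] equals [F(x^k) - a_0] at [x^k].  For [k = 0]
   this gives [a_0 = F(x_0)].  Unwinding that finite continued fraction from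
   the outside in shows that [G_k(xi) = 1 + A_k(x^k, xi)] wherever [G_k] is
   defined, and for [k = 1] directly [F(x^1) = a_0 + A_1(x^1, xi)].  Finally
   [A_k(x^k, xi)] is the integral of [a_k (x_k - x_(k-1))] over [[xi, 1]], whose
   derivative in [xi] is [-a_k(xi) (x_k(xi) - x_(k-1)(xi))]. *)
From Stdlib Require Import Reals Lra Lia Arith List ClassicalEpsilon.
From Coquelicot Require Import Coquelicot.
Open Scope R_scope.

(* [cf1 A j m] is [A_j/1 + ... + A_(j+m-1)/1]; [cf_back A v m] is
   [A_m/(-1 + A_(m-1)/(-1 + ... + A_1/v))], the shape of [G_k]. *)
Definition cf1 (A : nat -> R) (j m : nat) : option R :=
  cf_tail (map (fun i => (A i, 1)) (seq j m)).

Definition cf_back (A : nat -> R) (v : R) (m : nat) : option R :=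
  cf_tail (map (fun j => (A j, if Nat.eqb j 1 then v else -1)) (rev (seq 1 m))).

Lemma cf_tail_app_zero l1 l2 :
  cf_tail l2 = Some 0 -> cf_tail (l1 ++ l2) = cf_tail l1.
Proof. intros H; induction l1 as [|[c b] l IH]; simpl; [exact H|]; now rewrite IH. Qed.

Lemma cf_tail_app_defined l1 l2 :
  cf_tail (l1 ++ l2) <> None -> cf_tail l2 <> None.
Proof.
  induction l1 as [|[c b] l IH]; simpl; auto.
  intros H; apply IH; intros E; rewrite E in H; auto.
Qed.

Lemma cf_tail_cons c b l v : cf_tail ((c, b) :: l) = Some v ->
  exists w, cf_tail l = Some w /\ b + w <> 0 /\ v = c / (b + w).
Proof.
  simpl; destruct (cf_tail l) as [w|]; [|discriminate].
  destruct Req_EM_T; [discriminate|]; intros E; injection E; intros; subst; eauto.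
Qed.

Lemma cf_tail_zero_head b l :
  cf_tail ((0, b) :: l) <> None -> cf_tail ((0, b) :: l) = Some 0.
Proof.
  destruct (cf_tail ((0, b) :: l)) as [v|] eqn:E; [|congruence]; intros _.
  destruct (cf_tail_cons _ _ _ _ E) as [w [_ [_ ->]]]; f_equal; unfold Rdiv; ring.
Qed.

Lemma cf1_app A j m1 m2 :
  cf1 A j (m1 + m2) = cf_tail (map (fun i => (A i, 1)) (seq j m1) ++
                               map (fun i => (A i, 1)) (seq (j + m1) m2)).
Proof. unfold cf1; now rewrite seq_app, map_app. Qed.

Lemma cf1_truncate A n k y : (k <= n)%nat -> ((k < n)%nat -> A (S k) = 0) ->
  cf1 A 1 n = Some y -> cf1 A 1 k = Some y.
Proof.
  intros Hkn HA H.
  replace n with (k + (n - k))%nat in H by lia; rewrite cf1_app in H.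
  assert (Hdef : cf_tail (map (fun i => (A i, 1)) (seq (1 + k) (n - k))) <> None)
    by (eapply cf_tail_app_defined; rewrite H; discriminate).
  rewrite cf_tail_app_zero in H; [exact H|].
  destruct (n - k)%nat eqn:E; [reflexivity|].
  replace (1 + k)%nat with (S k) in * by lia; simpl map in *.
  rewrite HA in * by lia; now apply cf_tail_zero_head.
Qed.

Lemma cf1_single A j : cf1 A j 1 = Some (A j).
Proof.
  unfold cf1; simpl; destruct Req_EM_T as [E|_]; [lra|].
  f_equal; field.
Qed.

Section ForwardSuffixes.
Variables (A : nat -> R) (k : nat) (v : R).
Hypothesis Hv : cf1 A 1 k = Some v.

Definition cf1_suffix (j : nat) : R :=
  match cf1 A j (S k - j) with Some t => t | None => 0 end.

Lemma cf1_suffix_spec j : (1 <= j <= S k)%nat ->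
  cf1 A j (S k - j) = Some (cf1_suffix j).
Proof.
  intros Hj; unfold cf1_suffix.
  assert (Hdef : cf1 A 1 ((j - 1) + (S k - j)) <> None).
  { replace (j - 1 + (S k - j))%nat with k by lia; congruence. }
  rewrite cf1_app in Hdef; apply cf_tail_app_defined in Hdef.
  replace (1 + (j - 1))%nat with j in Hdef by lia.
  unfold cf1; destruct (cf_tail _); congruence.
Qed.

Lemma cf1_suffix_first : cf1_suffix 1 = v.
Proof.
  pose proof (cf1_suffix_spec 1 ltac:(lia)) as H.
  replace (S k - 1)%nat with k in H by lia; congruence.
Qed.

Lemma cf1_suffix_last : cf1_suffix (S k) = 0.
Proof. unfold cf1_suffix; now rewrite Nat.sub_diag. Qed.

Lemma cf1_suffix_step j : (1 <= j <= k)%nat ->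
  1 + cf1_suffix (S j) <> 0 /\ cf1_suffix j = A j / (1 + cf1_suffix (S j)).
Proof.
  intros Hj; pose proof (cf1_suffix_spec j ltac:(lia)) as H.
  pose proof (cf1_suffix_spec (S j) ltac:(lia)) as Hs.
  replace (S k - j)%nat with (S (S k - S j)) in H by lia.
  unfold cf1 in H, Hs; simpl in H, Hs.
  destruct (cf_tail_cons _ _ _ _ H) as [w [Hw [Hnz ->]]].
  rewrite Hw in Hs; injection Hs as <-; auto.
Qed.

Lemma cf1_suffix_invert j : (1 <= j <= k)%nat -> cf1_suffix j <> 0 ->
  A j / cf1_suffix j = 1 + cf1_suffix (S j).
Proof.
  intros Hj Hnz; destruct (cf1_suffix_step j Hj) as [Hd Heq].
  assert (HA : A j <> 0) by (intros E; apply Hnz; rewrite Heq, E; unfold Rdiv; ring).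
  rewrite Heq; field; auto.
Qed.

Lemma cf_back_S m : cf_back A v (S m) =
  match cf_back A v m with
  | Some w => let b := if Nat.eqb (S m) 1 then v else -1 in
              if Req_EM_T (b + w) 0 then None else Some (A (S m) / (b + w))
  | None => None
  end.
Proof. unfold cf_back; now rewrite seq_S, rev_app_distr. Qed.

Lemma cf_back_defined_le m M : (m <= M)%nat ->
  cf_back A v M <> None -> cf_back A v m <> None.
Proof.
  intros HmM; unfold cf_back.
  replace M with (m + (M - m))%nat by lia.
  rewrite seq_app, rev_app_distr, map_app; apply cf_tail_app_defined.
Qed.

(* Each level of [cf_back] undoes one level of the forward fraction. *)
Lemma cf_back_suffix m : (1 <= m <= k - 1)%nat -> cf_back A v m <> None ->
  cf_back A v m = Some (1 + cf1_suffix (S m)).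
Proof.
  induction m as [|m IH]; [lia|]; intros Hm Hdef.
  pose proof Hdef as Hdef'; rewrite cf_back_S in Hdef' |- *.
  destruct m as [|m].
  - cbn -[cf1_suffix] in Hdef' |- *; rewrite Rplus_0_r in Hdef' |- *.
    destruct Req_EM_T as [|Hnz]; [congruence|].
    rewrite <- cf1_suffix_first in Hnz |- *; rewrite cf1_suffix_invert; auto; lia.
  - assert (Hdefm : cf_back A v (S m) <> None)
      by exact (cf_back_defined_le (S m) (S (S m)) ltac:(lia) Hdef).
    rewrite IH in Hdef' |- * by (auto; lia).
    cbn -[cf1_suffix] in Hdef' |- *.
    replace (-1 + (1 + cf1_suffix (S (S m)))) with (cf1_suffix (S (S m))) in * by ring.
    destruct Req_EM_T as [|Hnz]; [congruence|].
    rewrite cf1_suffix_invert; auto; lia.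
Qed.

Lemma cf_back_inverts_cf1 : (2 <= k)%nat -> cf_back A v (k - 1) <> None ->
  cf_back A v (k - 1) = Some (1 + A k).
Proof.
  intros Hk Hdef; rewrite cf_back_suffix; auto; [|lia].
  replace (S (k - 1)) with k by lia.
  destruct (cf1_suffix_step k ltac:(lia)) as [_ ->].
  rewrite cf1_suffix_last; f_equal; field.
Qed.

End ForwardSuffixes.

(* Integrands are only continuous on [0,1]; composing with the retraction
   [clamp01] extends them continuously to the whole line. *)
Definition clamp01 (z : R) : R := Rmax 0 (Rmin 1 z).

Lemma clamp01_I01 z : I01 (clamp01 z).
Proof. unfold clamp01, I01, Rmax, Rmin; repeat destruct Rle_dec; lra. Qed.

Lemma clamp01_id z : I01 z -> clamp01 z = z.
Proof. unfold clamp01, I01, Rmax, Rmin; intros; repeat destruct Rle_dec; lra. Qed.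

Lemma clamp01_lipschitz y z : Rabs (clamp01 y - clamp01 z) <= Rabs (y - z).
Proof.
  unfold clamp01, Rmax, Rmin; repeat destruct Rle_dec; unfold Rabs;
    repeat destruct Rcase_abs; lra.
Qed.

Lemma continuity_pt_clamp01 f z :
  cont01 f -> continuity_pt (fun y => f (clamp01 y)) z.
Proof.
  intros Hf eps Heps.
  destruct (Hf (clamp01 z) (clamp01_I01 z) eps Heps) as [d [Hd H]].
  exists d; split; [lra|]; intros y [_ Hy].
  apply H; [apply clamp01_I01|].
  eapply Rle_lt_trans; [apply clamp01_lipschitz|exact Hy].
Qed.

Lemma Rint_RInt f a b : ex_RInt f a b -> Rint f a b = RInt f a b.
Proof.
  intros H; unfold Rint.
  destruct (epsilon_spec (inhabits 0)
    (fun v => exists pr : Riemann_integrable f a b, RiemannInt pr = v)) as [pr <-].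
  { now exists (RiemannInt (ex_RInt_Reals_0 f a b H)), (ex_RInt_Reals_0 f a b H). }
  symmetry; apply RInt_Reals.
Qed.

Lemma node_before xs i xi z : z < xi -> node xs i xi z = xs O z.
Proof. intros; destruct i; simpl; auto; unfold Heav; destruct Rle_dec; lra. Qed.

Lemma node_after xs i xi z : xi <= z -> node xs i xi z = xs i z.
Proof. intros; destruct i; simpl; auto; unfold Heav; destruct Rle_dec; lra. Qed.

Lemma Acoef_own_node a xs j i xi :
  (j - 1 = i)%nat -> Acoef a xs j (node xs i xi) xi = 0.
Proof.
  intros <-; unfold Acoef.
  assert (E : forall z, Rmin 0 1 < z < Rmax 0 1 -> (fun _ : R => 0) z =
     (fun z => a j z * (node xs (j - 1) xi z - node xs (j - 1) xi z)) z)
    by (intros; ring).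
  rewrite Rint_RInt, <- (RInt_ext _ _ _ _ E), RInt_const.
  - unfold scal; simpl; unfold mult; simpl; ring.
  - eapply ex_RInt_ext; [exact E|apply ex_RInt_const].
Qed.

Definition coef_integrand (a xs : nat -> R -> R) (j k : nat) (z : R) : R :=
  a j (clamp01 z) * (xs k (clamp01 z) - xs (j - 1)%nat (clamp01 z)).

Section Integrand.
Variables (a xs : nat -> R -> R) (j k : nat).
Hypotheses (Ha : cont01 (a j)) (Hxk : cont01 (xs k)) (Hxj : cont01 (xs (j - 1)%nat)).

Lemma continuity_pt_coef_integrand z : continuity_pt (coef_integrand a xs j k) z.
Proof.
  apply continuity_pt_mult; [|apply continuity_pt_minus];
    now apply continuity_pt_clamp01.
Qed.

Lemma ex_RInt_coef_integrand u w : ex_RInt (coef_integrand a xs j k) u w.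
Proof.
  apply (@ex_RInt_continuous R_CompleteNormedModule); intros.
  apply continuity_pt_filterlim, continuity_pt_coef_integrand.
Qed.

(* Left of [xi] both nodes coincide with [x_0]; right of it they are [x_k]
   and [x_(j-1)]. *)
Lemma Acoef_node xi : I01 xi ->
  Acoef a xs j (node xs k xi) xi = RInt (coef_integrand a xs j k) xi 1.
Proof.
  intros Hxi; unfold Acoef, I01 in *.
  set (f := fun z => a j z * (node xs k xi z - node xs (j - 1) xi z)).
  assert (E1 : forall z, Rmin 0 xi < z < Rmax 0 xi -> (fun _ : R => 0) z = f z).
  { intros z Hz; unfold f; rewrite Rmin_left, Rmax_right in Hz by lra.
    rewrite !node_before by lra; ring. }
  assert (E2 : forall z, Rmin xi 1 < z < Rmax xi 1 -> coef_integrand a xs j k z = f z).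
  { intros z Hz; unfold f, coef_integrand; rewrite Rmin_left, Rmax_right in Hz by lra.
    rewrite clamp01_id by (unfold I01; lra); rewrite !node_after by lra; ring. }
  assert (X1 : ex_RInt f 0 xi) by (eapply ex_RInt_ext; [exact E1|apply ex_RInt_const]).
  assert (X2 : ex_RInt f xi 1)
    by (eapply ex_RInt_ext; [exact E2|apply ex_RInt_coef_integrand]).
  rewrite Rint_RInt by (eapply ex_RInt_Chasles; eauto).
  rewrite <- (RInt_Chasles _ _ _ _ X1 X2), <- (RInt_ext _ _ _ _ E1),
    <- (RInt_ext _ _ _ _ E2), RInt_const.
  unfold scal, plus; simpl; unfold mult, plus; simpl; ring.
Qed.

End Integrand.

Lemma derivable_pt_lim_RInt_lower f xi b : (forall z, continuity_pt f z) ->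
  derivable_pt_lim (fun t => RInt f t b) xi (- f xi).
Proof.
  intros Hf; apply is_derive_Reals, (is_derive_RInt' f (fun t => RInt f t b) xi b).
  - apply filter_forall; intros; apply (@RInt_correct R_CompleteNormedModule).
    apply (@ex_RInt_continuous R_CompleteNormedModule); intros.
    apply continuity_pt_filterlim, Hf.
  - apply continuity_pt_filterlim, Hf.
Qed.

Lemma has_deriv_within_ext (D : R -> Prop) f g xi l :
  D xi -> (forall y, D y -> f y = g y) ->
  derivable_pt_lim g xi l -> has_deriv_within D f xi l.
Proof.
  intros Hxi Hfg Hg eps Heps; destruct (Hg eps Heps) as [d Hd].
  exists d; split; [apply cond_pos|]; intros h Hh Hhd HD.
  rewrite !Hfg; auto.
Qed.

Lemma coef_of_derivative a xs k (D : R -> Prop) f c xi :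
  cont01 (a k) -> cont01 (xs k) -> cont01 (xs (k - 1)%nat) ->
  (forall y, D y -> I01 y) -> D xi -> xs k xi <> xs (k - 1)%nat xi ->
  (forall y, D y -> f y = c + Acoef a xs k (node xs k y) y) ->
  exists l, has_deriv_within D f xi l /\
    a k xi = -1 / (xs k xi - xs (k - 1)%nat xi) * l.
Proof.
  intros Ha Hxk Hxj HD Hxi Hne Hf.
  exists (- coef_integrand a xs k k xi); split.
  - apply (has_deriv_within_ext D _ (fun t => c + RInt (coef_integrand a xs k k) t 1));
      auto.
    + intros y Hy; rewrite Hf, Acoef_node; auto.
    + replace (- coef_integrand a xs k k xi) with (0 + - coef_integrand a xs k k xi)
        by ring.
      apply derivable_pt_lim_plus; [apply derivable_pt_lim_const|].
      apply derivable_pt_lim_RInt_lower; intros; now apply continuity_pt_coef_integrand.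
  - unfold coef_integrand; rewrite clamp01_id by auto.
    field; contradict Hne; lra.
Qed.

Lemma Qn_node_truncate n a0 a xs k xi y : (k <= n)%nat ->
  Qn n a0 a xs (node xs k xi) xi = Some y ->
  cf1 (fun j => Acoef a xs j (node xs k xi) xi) 1 k = Some (y - a0).
Proof.
  intros Hk H; unfold Qn, cfrac in H.
  fold (cf1 (fun j => Acoef a xs j (node xs k xi) xi) 1 n) in H.
  destruct (cf1 _ 1 n) as [w|] eqn:E; [|discriminate].
  injection H as <-.
  rewrite (cf1_truncate _ n k w); auto.
  - f_equal; ring.
  - intros; apply Acoef_own_node; lia.
Qed.

Theorem theorem1 (n : nat) (xs : nat -> R -> R) (F : (R -> R) -> R)
  (a0 : R) (a : nat -> R -> R)
  (Hn : (1 <= n)%nat)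
  (Hxc : forall i, (i <= n)%nat -> cont01 (xs i))
  (Hxne : forall k xi, (1 <= k <= n)%nat -> I01 xi -> xs k xi <> xs (k - 1)%nat xi)
  (HF : gateaux_diff (n - 1) F)
  (Hac : forall j, (1 <= j <= n)%nat -> cont01 (a j))
  (Hint : forall xi i, I01 xi -> (i <= n)%nat ->
     Qn n a0 a xs (node xs i xi) xi = Some (F (node xs i xi))) :
  a0 = F (xs O) /\
  (forall xi, I01 xi -> exists l,
     has_deriv_within I01 (fun t => F (node xs 1 t)) xi l /\
     a 1%nat xi = -1 / (xs 1%nat xi - xs O xi) * l) /\
  (forall k (J : R -> Prop), (2 <= k <= n)%nat -> rel_open01 J ->
     (forall xi, J xi -> Gk_cf F a xs k xi <> None) ->
     forall xi, J xi -> exists l,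
       has_deriv_within J (Gk F a xs k) xi l /\
       a k xi = -1 / (xs k xi - xs (k - 1)%nat xi) * l).
Proof.
  assert (Hcf : forall k xi, (k <= n)%nat -> I01 xi ->
    cf1 (fun j => Acoef a xs j (node xs k xi) xi) 1 k = Some (F (node xs k xi) - a0))
    by (intros; apply (Qn_node_truncate n), Hint; auto).
  assert (Ha0 : a0 = F (xs O)).
  { assert (H0 := Hcf O 0 ltac:(lia) ltac:(unfold I01; lra)).
    injection H0; simpl; lra. }
  split; [exact Ha0|]; split.
  - intros xi Hxi; apply (coef_of_derivative _ _ 1 I01 _ a0);
      [apply Hac; lia|apply Hxc; lia|apply Hxc; lia|auto|auto|apply Hxne; auto; lia|].
    intros y Hy; assert (H1 := Hcf 1%nat y Hn Hy).
    rewrite cf1_single in H1.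
    enough (Acoef a xs 1 (node xs 1 y) y = F (node xs 1 y) - a0) by lra; congruence.
  - intros k J Hk [HJ _] HG xi Hxi.
    apply (coef_of_derivative _ _ k J _ 1);
      [apply Hac; lia|apply Hxc; lia|apply Hxc; lia|auto|auto|apply Hxne; auto; lia|].
    intros y Hy; specialize (HG y Hy); unfold Gk, Gk_cf in *.
    change (cf_tail _) with
      (cf_back (fun j => Acoef a xs j (node xs k y) y) (F (node xs k y) - F (xs O)) (k - 1))
      in HG |- *.
    rewrite (cf_back_inverts_cf1 _ k); auto; [|lia].
    rewrite <- Ha0; apply Hcf; auto; lia.
Qed.
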